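(* Let $\mathcal{D}$ be any distribution on $\mathbb{R}^m\times\{-1,+1\}$, let $p,q>0$ and $\epsilon_p,\epsilon_q\ge0$, and let $f(\mathbf{x})=\operatorname{sign}(\mathbf{w}^T\mathbf{x}+b)$ for some $\mathbf{w}\in\mathbb{R}^m$, $b\in\mathbb{R}$. Let $S_p(\mathbf{x})=\{\mathbf{x}+\mathbf{r}:\|\mathbf{r}\|_p\le\epsilon_p\}$, $S_q(\mathbf{x})=\{\mathbf{x}+\mathbf{r}:\|\mathbf{r}\|_q\le\epsilon_q\}$ and $S_{\mathrm{affine}}(\mathbf{x})=\{\mathbf{x}+\mathbf{r}_1+\mathbf{r}_2:\beta\in[0,1],\ \|\mathbf{r}_1\|_p\le\beta\epsilon_p,\ \|\mathbf{r}_2\|_q\le(1-\beta)\epsilon_q\}$. Then $$\mathcal{R}^{\mathrm{max}}_{\mathrm{adv}}(f;S_p,S_q)=\mathcal{R}_{\mathrm{adv}}(f;S_{\mathrm{affine}}).$$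
   Context: $\|\mathbf{r}\|_p=(\sum_i|r_i|^p)^{1/p}$ (for $p=\infty$, $\max_i|r_i|$). $\operatorname{sign}(t)=+1$ for $t\ge0$ and $-1$ for $t<0$. Adversarial risk: $\mathcal{R}_{\mathrm{adv}}(f;S)=\Pr_{(\mathbf{x},y)\sim\mathcal{D}}[\exists\,\mathbf{x}'\in S(\mathbf{x}): f(\mathbf{x}')\neq y]$; $\mathcal{R}^{\mathrm{max}}_{\mathrm{adv}}(f;S_p,S_q)=\mathcal{R}_{\mathrm{adv}}(f;S_p\cup S_q)$ with $(S_p\cup S_q)(\mathbf{x})=S_p(\mathbf{x})\cup S_q(\mathbf{x})$. *)

From Stdlib Require Import Reals.
From mathcomp Require Import all_boot.
Set Implicit Arguments.
Unset Strict Implicit.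
Unset Printing Implicit Defensive.

Local Open Scope R_scope.

Definition vec (m : nat) := 'I_m -> R.

(* Exponent p of an l_p (quasi-)norm: a positive real, or infinity. *)
Inductive pexp := Pfin (p : R) | Pinf.
Definition pexp_pos (p : pexp) : Prop :=
  match p with Pfin r => 0 < r | Pinf => True end.

(* t^y for t >= 0, y > 0, with 0^y = 0 (Stdlib's Rpower 0 y is 1). *)
Definition rpow (t y : R) : R := if Rlt_dec 0 t then Rpower t y else 0.

Definition lp_norm (m : nat) (p : pexp) (r : vec m) : R :=
  match p with
  | Pfin p => rpow (\big[Rplus/0]_(i < m) rpow (Rabs (r i)) p) (/ p)
  | Pinf => \big[Rmax/0]_(i < m) Rabs (r i)
  end.

Definition sgn (t : R) : R := if Rle_dec 0 t then 1 else -1.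

Definition lin_clf (m : nat) (w : vec m) (b : R) (x : vec m) : R :=
  sgn (\big[Rplus/0]_(i < m) (w i * x i) + b).

Inductive label := LPos | LNeg.
Definition lab_val (y : label) : R := match y with LPos => 1 | LNeg => -1 end.

Definition pset (m : nat) := vec m -> vec m -> Prop.

Definition S_ball (m : nat) (p : pexp) (eps : R) : pset m :=
  fun x x' => exists r : vec m, lp_norm p r <= eps /\ x' = (fun i => x i + r i).

Definition S_affine (m : nat) (p q : pexp) (eps_p eps_q : R) : pset m :=
  fun x x' => exists (beta : R) (r1 r2 : vec m),
    0 <= beta <= 1 /\ lp_norm p r1 <= beta * eps_p /\
    lp_norm q r2 <= (1 - beta) * eps_q /\
    x' = (fun i => x i + r1 i + r2 i).

Definition S_union (m : nat) (S1 S2 : pset m) : pset m :=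
  fun x x' => S1 x x' \/ S2 x x'.

(* A distribution D on R^m x {-1,+1} is represented by the map assigning
   to each event its probability; no property of D is needed. *)
Definition distr (m : nat) := (vec m * label -> Prop) -> R.

Definition R_adv (m : nat) (D : distr m) (f : vec m -> R) (S : pset m) : R :=
  D (fun z => exists x', S z.1 x' /\ f x' <> lab_val z.2).

Definition R_adv_max (m : nat) (D : distr m) (f : vec m -> R) (Sp Sq : pset m) : R :=
  R_adv D f (S_union Sp Sq).

From Stdlib Require Import Reals Lra Psatz.
From Stdlib Require Import FunctionalExtensionality PropExtensionality Classical.
From mathcomp Require Import all_boot.
Local Open Scope R_scope.
Set Implicit Arguments.
Unset Strict Implicit.

(* For a linear classifier, attacking with the union S_p ∪ S_q is exactly as
   strong as attacking with the "affine" set S_affine, whose points are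
   x + r1 + r2 with ||r1||_p <= beta eps_p and ||r2||_q <= (1-beta) eps_q.
   - The union is contained in S_affine (take beta = 1 or beta = 0), so the
     union attack is never stronger.
   - Conversely, using positive homogeneity and definiteness of the l_p
     norms, every point of S_affine(x) is a convex combination
     beta a + (1-beta) c of a point a of S_p(x) and a point c of S_q(x).
     A linear classifier evaluates w^T x' + b affinely along this segment,
     and each class {t | sign t = v} is convex; so if x' is misclassified,
     a or c is misclassified too. *)

Lemma big_ge_term (op : R -> R -> R) :
  (forall a b, 0 <= a -> 0 <= b -> a <= op a b /\ b <= op a b) ->
  forall m (F : 'I_m -> R), (forall i, 0 <= F i) ->
  forall j, F j <= \big[op/0]_(i < m) F i.
Proof.
move=> Hop; elim=> [|m IH] F F_ge0 j; first by case: j.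
have big_ge0 : 0 <= \big[op/0]_(i < m) F (lift ord0 i).
  apply: (big_ind (fun t => 0 <= t)); [lra | | by move=> i _; apply: F_ge0].
  by move=> a c Ha Hc; have [Ha' _] := Hop _ _ Ha Hc; lra.
rewrite big_ord_recl; have [head_le rest_le] := Hop _ _ (F_ge0 ord0) big_ge0.
case: (unliftP ord0 j) => [j' ->|->] //.
exact: Rle_trans (IH _ (fun i => F_ge0 _) j') rest_le.
Qed.

Lemma big_homog (op : R -> R -> R) (c : R) :
  (forall a b, op (c * a) (c * b) = c * op a b) ->
  forall m (F : 'I_m -> R),
  \big[op/0]_(i < m) (c * F i) = c * \big[op/0]_(i < m) F i.
Proof.
move=> Hop m F; apply: (big_rec2 (fun s t => s = c * t)); first ring.
by move=> i s t _ ->; rewrite Hop.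
Qed.

Lemma rpow_ge0 (t y : R) : 0 <= rpow t y.
Proof. rewrite /rpow; case: Rlt_dec => /= Ht; [left; exact: exp_pos | lra]. Qed.

Lemma rpow_le0 (t y : R) : rpow t y <= 0 -> t <= 0.
Proof.
rewrite /rpow; case: Rlt_dec => /= Ht H; last lra.
by have := exp_pos (y * ln t); rewrite /Rpower in H; lra.
Qed.

Lemma rpowM (c t y : R) : 0 < c -> 0 <= t -> rpow (c * t) y = rpow c y * rpow t y.
Proof.
move=> c_gt0 t_ge0; rewrite /rpow.
case: (Rlt_dec 0 c) => /= // _; case: (Rlt_dec 0 t) => /= Ht.
- case: Rlt_dec => /= H; last by exfalso; apply: H; nra.
  by rewrite Rpower_mult_distr.
- have -> : t = 0 by lra.
  by rewrite Rmult_0_r; case: Rlt_dec => /= H; lra.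
Qed.

Lemma rpowK (c p : R) : 0 < c -> 0 < p -> rpow (rpow c p) (/ p) = c.
Proof.
move=> c_gt0 p_gt0; rewrite {2}/rpow; case: Rlt_dec => /= // _.
rewrite /rpow; case: Rlt_dec => /= [_|H]; last by exfalso; apply: H; exact: exp_pos.
by rewrite Rpower_mult Rinv_r ?Rpower_1 //; lra.
Qed.

Lemma lp_norm0 (m : nat) (p : pexp) : lp_norm p (fun _ : 'I_m => 0) = 0.
Proof.
have zero_terms (op : R -> R -> R) : op 0 0 = 0 -> \big[op/0]_(i < m) 0 = 0.
  by move=> Hop; apply: (big_rec (fun s => s = 0)) => // i s _ ->.
case: p => [p|] /=; rewrite Rabs_R0.
- have -> : rpow 0 p = 0 by rewrite /rpow; case: Rlt_dec => /= H; lra.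
  rewrite zero_terms //; last by rewrite Rplus_0_r.
  by rewrite /rpow; case: Rlt_dec => /= H; lra.
- by rewrite zero_terms // Rmax_left //; lra.
Qed.

Lemma lp_normZ (m : nat) (p : pexp) (r : vec m) (c : R) :
  pexp_pos p -> 0 < c -> lp_norm p (fun i => c * r i) = c * lp_norm p r.
Proof.
move=> p_pos c_gt0.
have absZ i : Rabs (c * r i) = c * Rabs (r i).
  by rewrite Rabs_mult Rabs_pos_eq //; lra.
case: p p_pos => [p|] /= p_gt0.
- have cp_gt0 : 0 < rpow c p by rewrite /rpow; case: Rlt_dec => /= // _; exact: exp_pos.
  have sum_ge0 : 0 <= \big[Rplus/0]_(i < m) rpow (Rabs (r i)) p.
    apply: (big_ind (fun t => 0 <= t)) => [|s t Hs Ht|i _]; [lra | lra | exact: rpow_ge0].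
  under eq_bigr => i _ do rewrite absZ (rpowM _ c_gt0 (Rabs_pos _)).
  rewrite big_homog; last by move=> a b; ring.
  by rewrite rpowM // rpowK.
- under eq_bigr => i _ do rewrite absZ.
  by rewrite big_homog // => a b; rewrite RmaxRmult //; lra.
Qed.

Lemma lp_norm_le0 (m : nat) (p : pexp) (r : vec m) :
  pexp_pos p -> lp_norm p r <= 0 -> forall i, r i = 0.
Proof.
move=> p_pos r_le0 i.
suff abs_le0 : Rabs (r i) <= 0.
  by case: (Req_dec (r i) 0) => // /Rabs_no_R0; have := Rabs_pos (r i); lra.
case: p p_pos r_le0 => [p|] /= _ r_le0.
- apply: (@rpow_le0 _ p); apply: Rle_trans _ (rpow_le0 r_le0).
  apply: (big_ge_term (op := Rplus)) => [a b ? ?|j]; [lra | exact: rpow_ge0].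
- apply: Rle_trans _ r_le0.
  apply: (big_ge_term (op := Rmax)) => [a b _ _|j]; last exact: Rabs_pos.
  by split; [apply: Rmax_l | apply: Rmax_r].
Qed.

(* A vector of norm at most beta eps (beta >= 0) is beta times a vector of
   norm at most eps; for beta = 0 this uses definiteness. *)
Lemma lp_norm_scaled_ball (m : nat) (p : pexp) (r : vec m) (beta eps : R) :
  pexp_pos p -> 0 <= eps -> 0 <= beta -> lp_norm p r <= beta * eps ->
  exists s : vec m, lp_norm p s <= eps /\ forall i, r i = beta * s i.
Proof.
move=> p_pos eps_ge0 [beta_gt0|<-] r_le.
- exists (fun i => / beta * r i); split.
  + rewrite lp_normZ //; last exact: Rinv_0_lt_compat.
    apply: (Rmult_le_reg_l beta) => //.
    by rewrite -Rmult_assoc Rinv_r; lra.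
  + by move=> i; field; lra.
- exists r; split; first lra.
  by move=> i; rewrite Rmult_0_l; apply: (lp_norm_le0 p_pos); lra.
Qed.

Definition dot (m : nat) (w v : vec m) : R := \big[Rplus/0]_(i < m) (w i * v i).

Definition comb (m : nat) (beta : R) (a c : vec m) : vec m :=
  fun i => beta * a i + (1 - beta) * c i.

Lemma dot_comb (m : nat) (w : vec m) (beta : R) (a c : vec m) :
  dot w (comb beta a c) = beta * dot w a + (1 - beta) * dot w c.
Proof.
apply: (big_rec3 (fun s t u => s = beta * t + (1 - beta) * u)); first ring.
by move=> i s t u _ ->; rewrite /comb; ring.
Qed.

Lemma lin_clf_comb (m : nat) (w : vec m) (b beta : R) (a c : vec m) :
  lin_clf w b (comb beta a c)
  = sgn (beta * (dot w a + b) + (1 - beta) * (dot w c + b)).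
Proof.
rewrite /lin_clf -/(dot w (comb beta a c)) dot_comb.
by congr sgn; ring.
Qed.

Lemma sgn_comb (s t beta v : R) : 0 <= beta <= 1 ->
  sgn s = v -> sgn t = v -> sgn (beta * s + (1 - beta) * t) = v.
Proof.
rewrite /sgn => beta01; case: Rle_dec => /= Hs <-; case: Rle_dec => /= Ht //; try lra.
- by case: Rle_dec => /= // H; exfalso; apply: H; nra.
- by case: Rle_dec => /= // H; nra.
Qed.

(* Each ball is contained in S_affine (beta = 1, resp. beta = 0). *)
Lemma S_union_sub_affine (m : nat) (p q : pexp) (eps_p eps_q : R) (x x' : vec m) :
  0 <= eps_p -> 0 <= eps_q ->
  S_union (S_ball p eps_p) (S_ball q eps_q) x x' -> S_affine p q eps_p eps_q x x'.
Proof.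
move=> eps_p_ge0 eps_q_ge0 [[r [r_le ->]]|[r [r_le ->]]].
- exists 1, r, (fun _ => 0); rewrite lp_norm0; do 3 (split; first lra).
  by apply: functional_extensionality => i; ring.
- exists 0, (fun _ => 0), r; rewrite lp_norm0; do 3 (split; first lra).
  by apply: functional_extensionality => i; ring.
Qed.

Lemma S_affine_comb (m : nat) (p q : pexp) (eps_p eps_q : R) (x x' : vec m) :
  pexp_pos p -> pexp_pos q -> 0 <= eps_p -> 0 <= eps_q ->
  S_affine p q eps_p eps_q x x' ->
  exists beta a c, 0 <= beta <= 1 /\ S_ball p eps_p x a /\ S_ball q eps_q x c /\
                   x' = comb beta a c.
Proof.
move=> p_pos q_pos eps_p_ge0 eps_q_ge0 [beta [r1 [r2 [beta01 [r1_le [r2_le ->]]]]]].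
have [s1 [s1_le r1E]] := lp_norm_scaled_ball p_pos eps_p_ge0 (proj1 beta01) r1_le.
have [s2 [s2_le r2E]] :=
  lp_norm_scaled_ball (beta := 1 - beta) q_pos eps_q_ge0 ltac:(lra) r2_le.
exists beta, (fun i => x i + s1 i), (fun i => x i + s2 i).
do 3 (split; first by [|exists s1|exists s2]).
by apply: functional_extensionality => i; rewrite /comb r1E r2E; ring.
Qed.

(* Both risks measure the same event: a misclassified point of S_affine(x)
   yields a misclassified endpoint in S_p(x) or S_q(x), by convexity of the
   correctly classified half-space. *)
Theorem claim3 (m : nat) (D : distr m) (p q : pexp) (eps_p eps_q : R)
  (w : vec m) (b : R) :
  pexp_pos p -> pexp_pos q -> 0 <= eps_p -> 0 <= eps_q ->
  R_adv_max D (lin_clf w b) (S_ball p eps_p) (S_ball q eps_q)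
  = R_adv D (lin_clf w b) (S_affine p q eps_p eps_q).
Proof.
move=> p_pos q_pos eps_p_ge0 eps_q_ge0; rewrite /R_adv_max /R_adv; congr D.
apply: functional_extensionality => -[x y] /=.
apply: propositional_extensionality; split=> -[x' [x'_in x'_mis]].
  by exists x'; split=> //; exact: S_union_sub_affine.
have [beta [a [c [beta01 [a_in [c_in x'E]]]]]] :=
  S_affine_comb p_pos q_pos eps_p_ge0 eps_q_ge0 x'_in.
rewrite {}x'E lin_clf_comb in x'_mis.
have [a_mis|a_ok] := classic (lin_clf w b a <> lab_val y).
  by exists a; split=> //; left.
have [c_mis|c_ok] := classic (lin_clf w b c <> lab_val y).
  by exists c; split=> //; right.
by exfalso; apply: x'_mis; apply: sgn_comb => //; apply: NNPP.
Qed.
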